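(* For any finite quasi-discrete closure model $\mathcal{M}=((X,\mathcal{C}_R),\mathcal{V})$, any collective formula $\psi$ with $\mathit{size}(\psi)=k$, and any $A\subseteq X$, we have $\mathtt{Sat}_C(\mathcal{M},A,\psi)=\mathit{True}$ if and only if $\mathcal{M},A\models_C\psi$, and the computation takes in the worst case $\mathcal{O}(k\cdot(|X|+|R|))$ steps.
   Context: For $R\subseteq X\times X$, $\mathcal{C}_R(A)=A\cup\{x\mid\exists a\in A.(a,x)\in R\}$; a finite quasi-discrete closure model is $((X,\mathcal{C}_R),\mathcal{V})$ with $X$ finite and $\mathcal{V}:AP\to 2^X$. Paths are continuous maps $p:(\mathbb{N},\mathcal{C}_\succ)\to(X,\mathcal{C}_R)$ with $\succ=\{(n,n+1)\}$ (continuity: $p(\mathcal{C}_\succ(S))\subseteq\mathcal{C}_R(p(S))$); equivalently, sequences in which each consecutive pair is equal or in $R$. A set $B\subseteq X$ is path-connected if for all $x,y\in B$ there are a path $p$ and $i$ with $p(0)=x$, $p(i)=y$ and $p(j)\in B$ for all $j\le i$. SLCS formulas $\phi$ ($\Phi::=a\mid\top\mid\lnot\Phi\mid\Phi\land\Phi\mid\mathcal{N}\Phi\mid\Phi\,\mathcal{S}\,\Phi\mid\Phi\rightsquigarrow\Phi$) have individual satisfaction $\mathcal{M},x\models\phi$: $x\models a$ iff $x\in\mathcal{V}(a)$; boolean connectives classically; $x\models\mathcal{N}\phi$ iff $x\in\mathcal{C}_R(\{y\mid y\models\phi\})$; $x\models\phi_1\,\mathcal{S}\,\phi_2$ iff $x\models\phi_1$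 and for every path $p$ with $p(0)=x$ and every $l$, if $p(l)\models\lnot\phi_1$ then some $0<k\le l$ has $p(k)\models\phi_2$; $x\models\phi_1\rightsquigarrow\phi_2$ iff $x\models\phi_2$ and there are $y$, a path $p$ and $l$ with $p(0)=y$, $p(l)=x$, $y\models\phi_1$ and $p(i)\models\phi_2$ for $0<i<l$. Collective formulas: $\Psi::=\top\mid\lnot\Psi\mid\Psi\land\Psi\mid\phi\multimap\Psi\mid\mathcal{G}\phi$, with $\mathcal{M},A\models_C\top$ always, $\lnot,\land$ classically, $\mathcal{M},A\models_C\phi\multimap\psi$ iff $\mathcal{M},\{x\in A\mid x\models\phi\}\models_C\psi$, and $\mathcal{M},A\models_C\mathcal{G}\phi$ iff there is a path-connected $B\supseteq A$ with $z\models\phi$ for all $z\in B$. Size: for SLCS, $\mathit{size}(\top)=\mathit{size}(a)=1$, $\mathit{size}(\lnot\phi)=\mathit{size}(\mathcal{N}\phi)=1+\mathit{size}(\phi)$, binary operators $1+$ sum of sizes; for collective formulas, $\mathit{size}(\top)=1$, $\mathit{size}(\lnot\psi)=1+\mathit{size}(\psi)$, $\mathit{size}(\mathcal{G}\phi)=1+\mathit{size}(\phi)$, $\mathit{size}(\psi_1\land\psi_2)=1+\mathit{size}(\psi_1)+\mathit{size}(\psi_2)$, $\mathit{size}(\phi\multimap\psi)=1+\mathit{size}(\phi)+\mathit{size}(\psi)$. $\mathtt{Sat}(\mathcal{M},\phi)$ denotes a procedure returning $\{x\mid\mathcal{M},x\models\phi\}$ in $\mathcal{O}(\mathit{size}(\phi)(|X|+|R|))$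 steps. The procedure $\mathtt{Sat}_C(\mathcal{M},A,\psi)$: $\top\mapsto\mathit{True}$; $\lnot\psi_1\mapsto$ negation of $\mathtt{Sat}_C(\mathcal{M},A,\psi_1)$; $\psi_1\land\psi_2\mapsto$ conjunction of the two recursive results; $\phi\multimap\psi_1\mapsto\mathtt{Sat}_C(\mathcal{M},\mathtt{Sat}(\mathcal{M},\phi)\cap A,\psi_1)$; for $\mathcal{G}\phi$: if $A=\emptyset$ return $\mathit{True}$; let $B=\mathtt{Sat}(\mathcal{M},\phi)$; if $A\not\subseteq B$ return $\mathit{False}$; otherwise pick $x\in A$ and run Tarjan's strongly-connected-components depth-first search from $x$ in the directed graph $(X,R)$, following only edges $(u,v)\in R$ with $v\in B$; each time a strongly connected component $C$ is completed, if $A\cap C\neq\emptyset$ the procedure returns the truth value of $A\subseteq C$, otherwise the search continues. *)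

From mathcomp Require Import all_boot.
Set Implicit Arguments.
Unset Strict Implicit.
Unset Printing Implicit Defensive.

Inductive slcs (AP : Type) : Type :=
  | SAtom of AP
  | STrue
  | SNot of slcs AP
  | SAnd of slcs AP & slcs AP
  | SNear of slcs AP
  | SSurr of slcs AP & slcs AP
  | SReach of slcs AP & slcs AP.
Arguments STrue {AP}.

Inductive cform (AP : Type) : Type :=
  | CTrue
  | CNot of cform AP
  | CAnd of cform AP & cform AP
  | CImp of slcs AP & cform AP
  | CGroup of slcs AP.
Arguments CTrue {AP}.

Fixpoint ssize (AP : Type) (f : slcs AP) : nat :=
  match f with
  | SAtom _ | STrue => 1
  | SNot g | SNear g => (ssize g).+1
  | SAnd g h | SSurr g h | SReach g h => (ssize g + ssize h).+1
  end.

Fixpoint csize (AP : Type) (f : cform AP) : nat :=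
  match f with
  | CTrue => 1
  | CNot g => (csize g).+1
  | CAnd g h => (csize g + csize h).+1
  | CImp phi g => (ssize phi + csize g).+1
  | CGroup phi => (ssize phi).+1
  end.

Definition clo (T : Type) (Rel : T -> T -> Prop) (S : T -> Prop) : T -> Prop :=
  fun x => S x \/ exists a, S a /\ Rel a x.

Definition nat_succ (n m : nat) : Prop := m = n.+1.

(* continuity of p : (N, C_succ) -> (X, C_R):  p(C_succ(S)) <= C_R(p(S)) *)
Definition is_path (X : finType) (R : rel X) (p : nat -> X) : Prop :=
  forall (S : nat -> Prop) (y : X),
    (exists n, clo nat_succ S n /\ p n = y) ->
    clo (fun u v => R u v) (fun z => exists m, S m /\ p m = z) y.

Definition path_connected (X : finType) (R : rel X) (B : X -> Prop) : Prop :=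
  forall x y, B x -> B y ->
    exists p i, is_path R p /\ p 0 = x /\ p i = y /\ forall j, j <= i -> B (p j).

Fixpoint sem (AP : Type) (X : finType) (R : rel X) (V : AP -> {set X})
    (f : slcs AP) : X -> Prop :=
  match f with
  | SAtom a => fun x => x \in V a
  | STrue => fun _ => True
  | SNot g => fun x => ~ sem R V g x
  | SAnd g h => fun x => sem R V g x /\ sem R V h x
  | SNear g => clo (fun u v => R u v) (sem R V g)
  | SSurr g h => fun x =>
      sem R V g x /\
      forall p : nat -> X, is_path R p -> p 0 = x ->
        forall l, ~ sem R V g (p l) ->
          exists k, 0 < k <= l /\ sem R V h (p k)
  | SReach g h => fun x =>
      sem R V h x /\
      exists (y : X) (p : nat -> X) (l : nat),
        is_path R p /\ p 0 = y /\ p l = x /\ sem R V g y /\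
        forall i, 0 < i < l -> sem R V h (p i)
  end.

Fixpoint csem (AP : Type) (X : finType) (R : rel X) (V : AP -> {set X})
    (f : cform AP) : (X -> Prop) -> Prop :=
  match f with
  | CTrue => fun _ => True
  | CNot g => fun A => ~ csem R V g A
  | CAnd g h => fun A => csem R V g A /\ csem R V h A
  | CImp phi g => fun A => csem R V g (fun x => A x /\ sem R V phi x)
  | CGroup phi => fun A =>
      exists B : X -> Prop, (forall x, A x -> B x) /\ path_connected R B /\
        forall z, B z -> sem R V phi z
  end.

Definition nedges (X : finType) (R : rel X) : nat :=
  #|[set e : X * X | R e.1 e.2]|.

(* Cost model: the graph is accessed through adjacency lists (one step  *)
(* per edge (v,w) in R scanned), membership tests in A, B, on-stack are *)
(* O(1) (bitmaps), whole-set operations on subsets of X (emptiness,     *)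
(* inclusion, intersection, picking an element) cost |X| steps, and a   *)
(* call to the oracle Sat(M, phi) costs satc phi steps.                 *)

Section Tarjan.
Variables (X : finType) (R : rel X) (B A : {set X}).

Record tstate := TSt {
  t_idx : X -> option nat;   (* DFS index, None = unvisited *)
  t_low : X -> nat;
  t_stk : seq X;             (* Tarjan stack (top first) *)
  t_cnt : nat;
  t_cost : nat
}.

Inductive toutcome :=
  | TFound of bool & nat     (* early return with its value and total cost *)
  | TCont of tstate.

Definition upd (T : Type) (f : X -> T) (v : X) (a : T) : X -> T :=
  fun y => if y == v then a else f y.

Definition adj (v : X) : seq X := [seq w <- enum X | R v w].

(* Tarjan's strongconnect(v), following only edges (v,w) in R with w in B;
   when an SCC C is completed: if A :&: C != set0 return (A \subset C),
   otherwise continue the search. *)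
Fixpoint tvisit (fuel : nat) (v : X) (s : tstate) : toutcome :=
  match fuel with
  | 0 => TFound false (t_cost s)
  | fuel'.+1 =>
    let iv := t_cnt s in
    let s1 := TSt (upd (t_idx s) v (Some iv)) (upd (t_low s) v iv)
                  (v :: t_stk s) iv.+1 (t_cost s).+1 in
    let fix tedges (ws : seq X) (s : tstate) : toutcome :=
      match ws with
      | [::] => TCont s
      | w :: ws' =>
        let s := TSt (t_idx s) (t_low s) (t_stk s) (t_cnt s) (t_cost s).+1 in
        if w \notin B then tedges ws' s else
        match t_idx s w with
        | None =>
          match tvisit fuel' w s with
          | TFound b c => TFound b c
          | TCont s' =>
            tedges ws' (TSt (t_idx s')
                         (upd (t_low s') v (minn (t_low s' v) (t_low s' w)))
                         (t_stk s') (t_cnt s') (t_cost s'))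
          end
        | Some iw =>
          if w \in t_stk s then
            tedges ws' (TSt (t_idx s) (upd (t_low s) v (minn (t_low s v) iw))
                            (t_stk s) (t_cnt s) (t_cost s))
          else tedges ws' s
        end
      end in
    match tedges (adj v) s1 with
    | TFound b c => TFound b c
    | TCont s2 =>
      if t_low s2 v == iv then
        let C := take (index v (t_stk s2)).+1 (t_stk s2) in
        let rest := drop (index v (t_stk s2)).+1 (t_stk s2) in
        let c := t_cost s2 + (size C).+1 in
        if has (fun y => y \in A) C then TFound [forall a in A, a \in C] c
        else TCont (TSt (t_idx s2) (t_low s2) rest (t_cnt s2) c)
      else TCont s2
    end
  end.

Definition tinit : tstate := TSt (fun _ => None) (fun _ => 0) [::] 0 0.

Definition tarjan_from (x : X) : bool * nat :=
  match tvisit #|X|.+1 x tinit with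
  | TFound b c => (b, c)
  | TCont s => (false, t_cost s)
  end.

End Tarjan.

(* Sat_C(M, A, psi): returns (truth value, number of steps).
   [sat] is the procedure Sat(M, .) and [satc phi] its number of steps. *)
Fixpoint SatC (AP : Type) (X : finType) (R : rel X)
    (sat : slcs AP -> {set X}) (satc : slcs AP -> nat)
    (A : {set X}) (f : cform AP) : bool * nat :=
  match f with
  | CTrue => (true, 1)
  | CNot g => let r := SatC R sat satc A g in (~~ r.1, r.2.+1)
  | CAnd g h =>
      let r1 := SatC R sat satc A g in
      let r2 := SatC R sat satc A h in
      (r1.1 && r2.1, (r1.2 + r2.2).+1)
  | CImp phi g =>
      let r := SatC R sat satc (sat phi :&: A) g in
      (r.1, r.2 + satc phi + #|X|.+1)
  | CGroup phi =>
      if A == set0 then (true, #|X|.+1) else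
      let B := sat phi in
      if ~~ (A \subset B) then (false, satc phi + #|X| + #|X|.+1) else
      match [pick x in A] with
      | None => (false, satc phi + #|X| + #|X|.+1)
      | Some x =>
          let r := tarjan_from R B A x in
          (r.1, satc phi + #|X| + #|X| + #|X|.+1 + r.2)
      end
  end.

(* Only the operator G needs an argument. Let B = Sat(phi) and let A be a
   nonempty subset of B. Then M, A |=_C G phi iff A lies in one strongly
   connected component of the graph of the R-edges entering B: such a
   component is path-connected inside B, and conversely any path-connected set
   of phi-points containing A gives R-paths through B between points of A.
   Tarjan's search from x in A completes exactly strongly connected components,
   the component of x last, so the first completed component C meeting A
   exists, and A lies in one component iff A is contained in C.
   For the cost, the number of steps taken plus the stack size plus 3 + outdeg
   for each unvisited vertex never increases; it starts at 3|X| + |R|. *)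

From mathcomp Require Import all_boot zify.
Set Implicit Arguments.
Unset Strict Implicit.
Unset Printing Implicit Defensive.

Definition edge_in (X : finType) (R : rel X) (B : {set X}) : rel X :=
  [rel u w | R u w && (w \in B)].

Definition strongly_connected (X : finType) (e : rel X) (A : {set X}) : Prop :=
  {in A &, forall a a', connect e a a'}.

(** * Paths and strong connectivity *)

Section Paths.
Variables (X : finType) (R : rel X).

Lemma is_pathP (p : nat -> X) :
  is_path R p <-> forall n, p n.+1 = p n \/ R (p n) (p n.+1).
Proof.
split=> [hp n | hp S y [n [[hn | [a [ha ->]]] <-]]].
- have [|[m [-> ->]]|[a [[m [-> <-]] h]]] := hp (eq^~ n) (p n.+1); last 2 first.
  + by left.
  + by right.
  by exists n.+1; split => //; right; exists n.
- by left; exists n.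
- by case: (hp a) => [->|h]; [left; exists a | right; exists (p a); split => //; exists a].
Qed.

Lemma connect_closed (e : rel X) (Q : X -> Prop) x y :
  (forall u w, Q u -> e u w -> Q w) -> Q x -> connect e x y -> Q y.
Proof.
move=> closedQ Qx /connectP [p + ->]; elim: p x Qx => [|a p IHp] x Qx //=.
by case/andP => /(closedQ _ _ Qx) /IHp.
Qed.

Lemma path_nth_connect (e : rel X) z y p j : path e y p -> j <= size p ->
  connect e y (nth z (y :: p) j) /\ connect e (nth z (y :: p) j) (last y p).
Proof.
elim: p y j => [|a p IHp] y [|j] //= /andP [eya pth] hj.
- by split; last exact: connect_trans (connect1 eya) (proj2 (IHp a 0 pth isT)).
- have [h1 h2] := IHp a j pth hj; split => //.
  exact: connect_trans (connect1 eya) h1.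
Qed.

Lemma path_connected_scc (e : rel X) x : subrel e R ->
  path_connected R (fun y => connect e x y /\ connect e y x).
Proof.
move=> eR y z [cxy cyx] [cxz czx].
have /connectP [p pth ez] := connect_trans cyx cxz.
exists (fun n => nth z (y :: p) n), (size p); split; [|split; [by []|split]].
- apply/is_pathP => n; case: (ltngtP n (size p)) => hn.
  + by right; apply: eR; move/pathP: pth => /(_ z n hn).
  + by left; rewrite !nth_default //= ltnW.
  + by left; rewrite hn nth_default // -last_nth.
- by rewrite -last_nth ez.
- move=> j /(path_nth_connect z pth) [h1 h2]; rewrite -ez in h2.
  by split; [exact: connect_trans cxy h1 | exact: connect_trans h2 czx].
Qed.

Lemma path_connected_connect (B : {set X}) (P : X -> Prop) a a' :
  path_connected R P -> (forall z, P z -> z \in B) -> P a -> P a' ->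
  connect (edge_in R B) a a'.
Proof.
move=> hpc PB Pa Pa'; have [q [i [/is_pathP qp [q0 [<- Pq]]]]] := hpc a a' Pa Pa'.
elim: i Pq => [|i IHi] Pq; first by rewrite q0 connect0.
apply: connect_trans (IHi (fun j hj => Pq j (leqW hj))) _.
case: (qp i) => [->|h] //; apply: connect1; rewrite /edge_in /= h.
exact/PB/Pq.
Qed.

End Paths.

(** * Tarjan's search *)

Section Tarjan.
Variables (X : finType) (R : rel X) (B A : {set X}).

Local Notation E := (edge_in R B).
Local Notation tvisit := (tvisit R B A).

Definition push_vertex (v : X) (s : tstate X) :=
  TSt (upd (t_idx s) v (Some (t_cnt s))) (upd (t_low s) v (t_cnt s))
      (v :: t_stk s) (t_cnt s).+1 (t_cost s).+1.

Definition tick (s : tstate X) :=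
  TSt (t_idx s) (t_low s) (t_stk s) (t_cnt s) (t_cost s).+1.

Definition set_low (s : tstate X) v n :=
  TSt (t_idx s) (upd (t_low s) v n) (t_stk s) (t_cnt s) (t_cost s).

Definition scan_edges (fuel : nat) (v : X) : seq X -> tstate X -> toutcome X :=
  fix scan ws s :=
    if ws is w :: ws' then
      if w \notin B then scan ws' (tick s) else
      match t_idx s w with
      | None =>
        match tvisit fuel w (tick s) with
        | TFound b c => TFound _ b c
        | TCont s' => scan ws' (set_low s' v (minn (t_low s' v) (t_low s' w)))
        end
      | Some iw =>
        if w \in t_stk s then scan ws' (set_low (tick s) v (minn (t_low s v) iw))
        else scan ws' (tick s)
      end
    else TCont s.

Definition finish_visit (v : X) (iv : nat) (r : toutcome X) : toutcome X :=
  match r with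
  | TFound b c => TFound _ b c
  | TCont s =>
    if t_low s v == iv then
      let C := take (index v (t_stk s)).+1 (t_stk s) in
      let rest := drop (index v (t_stk s)).+1 (t_stk s) in
      let c := t_cost s + (size C).+1 in
      if has (fun y => y \in A) C then TFound _ [forall a in A, a \in C] c
      else TCont (TSt (t_idx s) (t_low s) rest (t_cnt s) c)
    else TCont s
  end.

Lemma tvisit_unfold f v s :
  tvisit f.+1 v s = finish_visit v (t_cnt s) (scan_edges f v (adj R v) (push_vertex v s)).
Proof. by []. Qed.

Lemma scan_edges_cons f v w ws s : scan_edges f v (w :: ws) s =
  if w \notin B then scan_edges f v ws (tick s) else
  match t_idx s w with
  | None => match tvisit f w (tick s) with
            | TFound b c => TFound _ b c
            | TCont s' => scan_edges f v ws (set_low s' v (minn (t_low s' v) (t_low s' w)))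
            end
  | Some iw => if w \in t_stk s then scan_edges f v ws (set_low (tick s) v (minn (t_low s v) iw))
               else scan_edges f v ws (tick s)
  end.
Proof. by []. Qed.

Lemma mem_adj v w : (w \in adj R v) = R v w.
Proof. by rewrite mem_filter mem_enum andbT. Qed.

(* An unvisited vertex carries credits for its push, its stack slot, the
   constant part of its pop and each of its out-edges; the stack slot later
   pays for the removal of the vertex. *)
Definition unvisited_weight (s : tstate X) :=
  \sum_(y | t_idx s y == None) (3 + size (adj R y)).

Definition potential (s : tstate X) :=
  t_cost s + size (t_stk s) + unvisited_weight s.

Definition cost_within (s : tstate X) (r : toutcome X) (extra : nat) :=
  match r with
  | TFound _ c => c <= potential s + extra
  | TCont s' => potential s' <= potential s + extra
  end.

Lemma unvisited_weight_push v s : t_idx s v = None ->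
  unvisited_weight s = unvisited_weight (push_vertex v s) + (3 + size (adj R v)).
Proof.
move=> hv; rewrite /unvisited_weight (bigD1 v) /=; last by rewrite hv.
rewrite addnC; congr (_ + _); apply: eq_bigl => y /=.
by rewrite /upd; case: (y =P v) => [->|_]; rewrite ?hv ?andbF ?andbT.
Qed.

Lemma scan_edges_cost f v :
  (forall w s, t_idx s w = None -> cost_within s (tvisit f w s) 0) ->
  forall ws s, cost_within s (scan_edges f v ws s) (size ws).
Proof.
move=> visit_cost; elim=> [|w ws IHws] s; first by rewrite /cost_within /=; lia.
have step s' : potential s' <= (potential s).+1 ->
    cost_within s (scan_edges f v ws s') (size ws).+1.
  by move: (IHws s'); rewrite /cost_within; case: (scan_edges _ _ _ _) => [b c|s'']; lia.
rewrite scan_edges_cons; case: ifP => _; first exact: step.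
case Ew: (t_idx s w) => [iw|]; first by case: ifP => _; apply: step.
move: (visit_cost w (tick s) Ew); rewrite /cost_within /potential /unvisited_weight.
case: (tvisit _ _ _) => [b c|s'] /= hc; first lia.
by apply: step; rewrite /potential /unvisited_weight /=; lia.
Qed.

Lemma tvisit_cost f v s : t_idx s v = None -> cost_within s (tvisit f v s) 0.
Proof.
elim: f v s => [|f IHf] v s hv; first by rewrite /cost_within /potential /=; lia.
rewrite tvisit_unfold.
have hpot : potential s = potential (push_vertex v s) + size (adj R v) + 1.
  by rewrite /potential (unvisited_weight_push hv) /=; lia.
move: (scan_edges_cost v IHf (adj R v) (push_vertex v s)); rewrite /cost_within /finish_visit.
case: (scan_edges _ _ _ _) => [b c|s2] hc; first lia.
have hsize := congr1 size (cat_take_drop (index v (t_stk s2)).+1 (t_stk s2)).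
rewrite size_cat in hsize.
case: ifP => _; last lia.
by case: ifP => _; move: hc hpot; rewrite /potential /unvisited_weight /=; lia.
Qed.

Lemma tarjan_from_cost x : (tarjan_from R B A x).2 <= 3 * #|X| + \sum_(y : X) size (adj R y).
Proof.
have hpot : potential (tinit X) = 3 * #|X| + \sum_(y : X) size (adj R y).
  rewrite /potential /unvisited_weight /= add0n big_split /= sum_nat_const.
  by rewrite mulnC; congr (_ + _); apply: eq_bigl.
move: (tvisit_cost #|X|.+1 (erefl : t_idx (tinit X) x = None)).
rewrite -hpot /tarjan_from /cost_within.
by case: (tvisit _ _ _) => [b c|s] /=; rewrite /potential; lia.
Qed.

Definition idx_extends (s s' : tstate X) :=
  forall y n, t_idx s y = Some n -> t_idx s' y = Some n.

Definition fresh (s s' : tstate X) y := (t_idx s y == None) && (t_idx s' y != None).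

Definition unvisited (s : tstate X) := #|[set y | t_idx s y == None]|.

(* A vertex is done once visited and popped; done vertices are closed under E,
   and the search stops as soon as a vertex of A would become done. *)
Record tarjan_inv (s : tstate X) : Prop := {
  inv_idx_lt : forall y n, t_idx s y = Some n -> n < t_cnt s;
  inv_stk_visited : forall y, y \in t_stk s -> t_idx s y != None;
  inv_done_closed : forall y z, t_idx s y != None -> y \notin t_stk s -> E y z ->
    t_idx s z != None /\ z \notin t_stk s;
  inv_A_stk : forall y, y \in A -> t_idx s y != None -> y \in t_stk s
}.

(* The classical invariants of Tarjan's algorithm for a call on v from s
   returning s'. Fresh vertices left on the stack reach a stack vertex of
   smaller index ([vp_rch]), hence are not roots. *)
Record visit_post (v : X) (s s' : tstate X) : Prop := {
  vp_inv : tarjan_inv s';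
  vp_idx : idx_extends s s';
  vp_v : t_idx s' v = Some (t_cnt s);
  vp_new : forall y n, t_idx s y = None -> t_idx s' y = Some n -> t_cnt s <= n;
  vp_cnt : t_cnt s < t_cnt s';
  vp_stk : exists P, t_stk s' = P ++ t_stk s /\ forall y, y \in P -> fresh s s' y;
  vp_low : (t_low s' v = t_cnt s /\ t_stk s' = t_stk s) \/
    exists u k, [/\ u \in t_stk s, t_idx s u = Some k, t_low s' v = k & connect E v u];
  vp_rch : forall y, fresh s s' y -> y \in t_stk s' -> exists u k k',
    [/\ u \in t_stk s', t_idx s' u = Some k, t_idx s' y = Some k', k < k' & connect E y u];
  vp_reach : forall y, fresh s s' y -> connect E v y;
  vp_edge : forall y z, fresh s s' y -> E y z -> t_idx s' z != None /\
    (forall k, t_idx s z = Some k -> z \in t_stk s -> t_low s' v <= k);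
  vp_low_old : forall y, t_idx s y != None -> t_low s' y = t_low s y
}.

(* The same invariants inside the edge loop of v, v having been pushed on s0. *)
Record scan_inv (v : X) (s0 t : tstate X) (fuel : nat) : Prop := {
  si_inv : tarjan_inv t;
  si_idx : idx_extends s0 t;
  si_v : t_idx t v = Some (t_cnt s0);
  si_new : forall y n, t_idx s0 y = None -> t_idx t y = Some n -> t_cnt s0 <= n;
  si_cnt : t_cnt s0 < t_cnt t;
  si_stk : exists P, t_stk t = P ++ v :: t_stk s0 /\
    forall y, y \in P -> fresh s0 t y /\ y != v;
  si_low_le : t_low t v <= t_cnt s0;
  si_low : t_low t v = t_cnt s0 \/
    exists u k, [/\ u \in t_stk s0, t_idx s0 u = Some k, t_low t v = k & connect E v u];
  si_rch : forall y, fresh s0 t y -> y != v -> y \in t_stk t -> exists u k k',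
    [/\ u \in t_stk t, t_idx t u = Some k, t_idx t y = Some k', k < k' & connect E y u];
  si_reach : forall y, fresh s0 t y -> connect E v y;
  si_edge : forall y z, fresh s0 t y -> y != v -> E y z -> t_idx t z != None /\
    (forall k, t_idx s0 z = Some k -> z \in t_stk s0 -> t_low t v <= k);
  si_low_old : forall y, t_idx s0 y != None -> t_low t y = t_low s0 y;
  si_fuel : unvisited t <= fuel
}.

Definition scanned (v : X) (s0 t : tstate X) (w : X) :=
  E v w -> t_idx t w != None /\
  (forall k, t_idx s0 w = Some k -> w \in t_stk s0 -> t_low t v <= k).

Definition visit_spec (v : X) (s : tstate X) (r : toutcome X) :=
  match r with
  | TFound b _ => b = true <-> strongly_connected E A
  | TCont s' => visit_post v s s'
  end.

Definition scan_spec (f : nat) (v : X) (s0 : tstate X) (r : toutcome X) :=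
  match r with
  | TFound b _ => b = true <-> strongly_connected E A
  | TCont t => scan_inv v s0 t f /\ forall w, scanned v s0 t w
  end.

Lemma unvisited_mono s s' : idx_extends s s' -> unvisited s' <= unvisited s.
Proof.
move=> ext; apply/subset_leq_card/subsetP => y; rewrite !inE => /eqP hy.
by case Ey: (t_idx s y) => [n|] //; rewrite (ext _ _ Ey) in hy.
Qed.

Lemma unvisited_push v s : t_idx s v = None -> unvisited (push_vertex v s) < unvisited s.
Proof.
move=> hv; apply/proper_card/properP; split; last by exists v; rewrite !inE /= /upd ?eqxx ?hv.
by apply/subsetP => y; rewrite !inE /= /upd; case: (y =P v) => //= ->; rewrite hv.
Qed.

Lemma fresh_push v s y : fresh s (push_vertex v s) y -> y = v.
Proof. by rewrite /fresh /= /upd; case: (y =P v) => // _ /andP [/eqP ->]. Qed.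

Lemma tarjan_inv_push v s : tarjan_inv s -> t_idx s v = None -> tarjan_inv (push_vertex v s).
Proof.
case=> I1 I2 I3 I4 hv; split => /=.
- move=> y n; rewrite /upd; case: (y =P v) => [_ [<-] // | _ /I1 /ltnW //].
- by move=> y; rewrite inE /upd; case: (y =P v) => //= _ /I2.
- move=> y z; rewrite /upd inE; case: (y =P v) => //= _ hy hny eyz.
  have [hz hnz] := I3 _ _ hy hny eyz.
  case: (z =P v) => [ez|/eqP zv]; first by rewrite ez hv in hz.
  by rewrite inE (negbTE zv).
- by move=> y yA; rewrite /upd inE; case: (y =P v) => //= _ /(I4 _ yA).
Qed.

Lemma scan_inv_push f v s : tarjan_inv s -> t_idx s v = None -> unvisited s <= f.+1 ->
  scan_inv v s (push_vertex v s) f.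
Proof.
move=> Is hv hf; constructor => /=; rewrite ?/upd ?eqxx //.
- exact: tarjan_inv_push.
- by move=> y n /= h; rewrite /upd; case: (y =P v) => [e|//]; rewrite e hv in h.
- by move=> y n hy; case: (y =P v) => [_ [<-] //|_]; rewrite hy.
- by exists [::].
- by left.
- move=> y hn yv; rewrite inE (negbTE yv) /= => /(inv_stk_visited Is) hy.
  by move: hn; rewrite /fresh /= /upd (negbTE yv) (negbTE hy).
- by move=> y /fresh_push ->.
- by move=> y z /fresh_push ->; rewrite eqxx.
- by move=> y hy; case: (y =P v) => // e; rewrite e hv in hy.
- by have := unvisited_push hv; move: hf; rewrite /unvisited /=; lia.
Qed.

Lemma scanned_mono v s0 t t' w : scanned v s0 t w -> idx_extends t t' ->
  t_low t' v <= t_low t v -> scanned v s0 t' w.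
Proof.
move=> sc ext hl /sc [h1 h2]; split => [|k h3 h4]; last exact: leq_trans hl (h2 k h3 h4).
by case Ew: (t_idx t w) h1 => [n|] // _; rewrite (ext _ _ Ew).
Qed.

Lemma fresh_split s t s' y : fresh s s' y -> fresh s t y \/ fresh t s' y.
Proof.
by case/andP=> h0 h'; case Ey: (t_idx t y) => [n|]; [left|right]; rewrite /fresh Ey ?h0 ?h'.
Qed.

Lemma fresh_trans s t s' y : idx_extends s t -> fresh t s' y -> fresh s s' y.
Proof.
move=> ext /andP [/eqP ht h']; rewrite /fresh h' andbT.
by case Ey: (t_idx s y) => [n|] //; rewrite (ext _ _ Ey) in ht.
Qed.

Lemma fresh_extends s t s' y : idx_extends t s' -> fresh s t y -> fresh s s' y.
Proof.
move=> ext /andP [h0]; rewrite /fresh h0 /=.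
by case Ey: (t_idx t y) => [n|] // _; rewrite (ext _ _ Ey).
Qed.

Lemma tarjan_inv_TSt s low c :
  tarjan_inv s -> tarjan_inv (TSt (t_idx s) low (t_stk s) (t_cnt s) c).
Proof. by case; split. Qed.

Lemma scan_inv_tick f v s0 t : scan_inv v s0 t f -> scan_inv v s0 (tick t) f.
Proof. by case=> *; constructor => //; apply: tarjan_inv_TSt. Qed.

Lemma scan_inv_old_stack f v s0 t u k : tarjan_inv s0 -> scan_inv v s0 t f ->
  u \in t_stk t -> t_idx t u = Some k -> k < t_cnt s0 ->
  u \in t_stk s0 /\ t_idx s0 u = Some k.
Proof.
move=> Is0 Jt + Eu hk; have [P [-> HP]] := si_stk Jt.
rewrite mem_cat inE => /orP [/HP [/andP [/eqP h0 _] _]|/orP [/eqP uv|uS0]].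
- by have := si_new Jt h0 Eu; lia.
- by move: Eu; rewrite uv (si_v Jt) => -[ek]; lia.
- have := inv_stk_visited Is0 uS0; case Eu0: (t_idx s0 u) => [k'|] // _.
  by move: (si_idx Jt Eu0); rewrite Eu => -[->].
Qed.

Lemma scan_back_edge f v s0 t w iw : tarjan_inv s0 -> t_idx s0 v = None ->
  scan_inv v s0 t f -> E v w -> t_idx t w = Some iw -> w \in t_stk t ->
  scan_inv v s0 (set_low (tick t) v (minn (t_low t v) iw)) f /\
  scanned v s0 (set_low (tick t) v (minn (t_low t v) iw)) w.
Proof.
move=> Is0 hv Jt evw Ew wS.
have low_v : upd (t_low t) v (minn (t_low t v) iw) v = minn (t_low t v) iw.
  by rewrite /upd eqxx.
split; last first.
  split=> [|k /(si_idx Jt)]; first by rewrite /= Ew.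
  by rewrite Ew => -[<-] _; rewrite /= low_v geq_minr.
case: (Jt) => Ji Jidx Jv Jnew Jcnt Jstk Jlow_le Jlow Jrch Jreach Jedge Jlow_old Jfuel.
constructor => //=; rewrite ?low_v.
- exact: (tarjan_inv_TSt _ _ Ji).
- exact: leq_trans (geq_minl _ _) Jlow_le.
- case: (leqP (t_low t v) iw) => h; first exact: Jlow.
  right; exists w, iw.
  have [] := scan_inv_old_stack Is0 Jt wS Ew (leq_trans h Jlow_le).
  by split => //; apply: connect1.
- move=> y z hy yv eyz; have [h1 h2] := Jedge _ _ hy yv eyz; split => // k hk hs.
  exact: leq_trans (geq_minl _ _) (h2 k hk hs).
- move=> y hy; rewrite /upd; case: (y =P v) => [e|_]; last exact: Jlow_old.
  by rewrite e hv in hy.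
Qed.

Section TreeEdge.
Variables (f : nat) (v w : X) (s0 t s' : tstate X).
Hypotheses (Is0 : tarjan_inv s0) (hv : t_idx s0 v = None) (Jt : scan_inv v s0 t f).
Hypotheses (evw : E v w) (Ew : t_idx t w = None) (Pv : visit_post w (tick t) s').

Local Notation t' := (set_low s' v (minn (t_low s' v) (t_low s' w))).

Lemma tree_edge_low_v : t_low t' v = minn (t_low t v) (t_low s' w).
Proof. by rewrite /= /upd eqxx (vp_low_old Pv) //= (si_v Jt). Qed.

Lemma tree_edge_stk_old y : y \in t_stk t -> y \in t_stk s'.
Proof. by have [Pc [-> _]] := vp_stk Pv; rewrite mem_cat orbC => ->. Qed.

Lemma tree_edge_stk : exists P, t_stk s' = P ++ v :: t_stk s0 /\
  forall y, y \in P -> fresh s0 s' y /\ y != v.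
Proof.
have [Pc [HPc HPcf]] := vp_stk Pv; have [P [HP HPf]] := si_stk Jt.
exists (Pc ++ P); split; first by rewrite HPc /= HP catA.
move=> y; rewrite mem_cat => /orP [/HPcf yPc|/HPf [hy ->]].
- split; first exact: fresh_trans (si_idx Jt) yPc.
  by apply/eqP => yv; move: yPc; rewrite /fresh yv /= (si_v Jt).
- by split => //; apply: fresh_extends (vp_idx Pv) hy.
Qed.

Lemma tree_edge_low : t_low t' v = t_cnt s0 \/
  exists u k, [/\ u \in t_stk s0, t_idx s0 u = Some k, t_low t' v = k & connect E v u].
Proof.
rewrite tree_edge_low_v; case: (leqP (t_low t v) (t_low s' w)) => h; first exact: si_low Jt.
have lt_w := leq_trans h (si_low_le Jt); right.
case: (vp_low Pv) => [[/= e _]|[u [k [uS ek lk cwu]]]].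
  by move: (si_cnt Jt) lt_w; rewrite e; lia.
rewrite lk in lt_w *; have [uS0 ek0] := scan_inv_old_stack Is0 Jt uS ek lt_w.
by exists u, k; split => //; apply: connect_trans (connect1 evw) cwu.
Qed.

Lemma tree_edge_rch y : fresh s0 s' y -> y != v -> y \in t_stk s' -> exists u k k',
  [/\ u \in t_stk s', t_idx s' u = Some k, t_idx s' y = Some k', k < k' & connect E y u].
Proof.
case/(fresh_split t) => [hy|hy] yv ys; last exact: vp_rch Pv y hy ys.
have yst : y \in t_stk t.
  have [Pc [HPc HPcf]] := vp_stk Pv; move: ys; rewrite HPc mem_cat => /orP [/HPcf|//].
  by case/andP: hy => _; rewrite /fresh /= => /negbTE ->.
have [u [k [k' [uS iu iy lt c]]]] := si_rch Jt hy yv yst.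
exists u, k, k'; split => //; first exact: tree_edge_stk_old.
  by rewrite (vp_idx Pv iu).
by rewrite (vp_idx Pv iy).
Qed.

Lemma tree_edge_edge y z : fresh s0 s' y -> y != v -> E y z -> t_idx s' z != None /\
  (forall k, t_idx s0 z = Some k -> z \in t_stk s0 -> t_low t' v <= k).
Proof.
rewrite tree_edge_low_v; case/(fresh_split t) => [hy|hy] yv eyz.
- have [h1 h2] := si_edge Jt hy yv eyz; split.
    by case Ez: (t_idx t z) h1 => [n|] // _; rewrite (vp_idx Pv Ez).
  by move=> k hk hs; apply: leq_trans (geq_minl _ _) (h2 k hk hs).
- have [h1 h2] := vp_edge Pv hy eyz; split => // k hk hs.
  apply: leq_trans (geq_minr _ _) (h2 k (si_idx Jt hk) _).
  by have [P [-> _]] := si_stk Jt; rewrite mem_cat inE hs !orbT.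
Qed.

Lemma scan_tree_edge : scan_inv v s0 t' f /\ scanned v s0 t' w.
Proof.
split; last by split=> [|k /(si_idx Jt)]; rewrite ?(vp_v Pv) // Ew.
constructor.
- exact: (tarjan_inv_TSt _ _ (vp_inv Pv)).
- by move=> y n /(si_idx Jt) /(vp_idx Pv).
- exact: (vp_idx Pv (si_v Jt)).
- move=> y n h0 hs; case Ey: (t_idx t y) => [m|].
    by move: hs; rewrite /= (vp_idx Pv Ey) => -[<-]; apply: (si_new Jt h0 Ey).
  by have := vp_new Pv Ey hs; have := si_cnt Jt; rewrite /=; lia.
- by have := vp_cnt Pv; have := si_cnt Jt; rewrite /=; lia.
- exact: tree_edge_stk.
- by rewrite tree_edge_low_v; apply: leq_trans (geq_minl _ _) (si_low_le Jt).
- exact: tree_edge_low.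
- exact: tree_edge_rch.
- move=> y /(fresh_split t) [hy|hy]; first exact: (si_reach Jt hy).
  exact: connect_trans (connect1 evw) (vp_reach Pv hy).
- exact: tree_edge_edge.
- move=> y hy; rewrite /= /upd; case: (y =P v) => [e|_]; first by rewrite e hv in hy.
  rewrite (vp_low_old Pv) ?(si_low_old Jt) //=.
  by case Ey0: (t_idx s0 y) hy => [n|] // _; rewrite (si_idx Jt Ey0).
- exact: leq_trans (unvisited_mono (vp_idx Pv)) (si_fuel Jt).
Qed.

End TreeEdge.

Lemma done_closed_connect s y z : tarjan_inv s -> t_idx s y != None -> y \notin t_stk s ->
  connect E y z -> t_idx s z != None /\ z \notin t_stk s.
Proof.
move=> Is hy hny.
apply: (@connect_closed _ _ (fun z => t_idx s z != None /\ z \notin t_stk s)) => //.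
by move=> u w [h1 h2]; apply: inv_done_closed.
Qed.

Lemma subset_scc (C : pred X) v a0 :
  (forall y, C y <-> connect E v y /\ connect E y v) -> a0 \in A -> C a0 ->
  {subset A <= C} <-> strongly_connected E A.
Proof.
move=> Cscc a0A /Cscc [cva0 ca0v]; split.
- move=> AC a a' /AC /Cscc [_ cav] /AC /Cscc [cva' _].
  exact: connect_trans cav cva'.
- move=> Ascc a aA; apply/Cscc; split.
  + exact: connect_trans cva0 (Ascc _ _ a0A aA).
  + exact: connect_trans (Ascc _ _ aA a0A) ca0v.
Qed.

Section PopComponent.
Variables (f : nat) (v : X) (s0 s2 : tstate X) (P : seq X).
Hypotheses (Is0 : tarjan_inv s0) (hv : t_idx s0 v = None) (Js : scan_inv v s0 s2 f).
Hypotheses (scanned_all : forall w, scanned v s0 s2 w) (root : t_low s2 v = t_cnt s0).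
Hypotheses (hP : t_stk s2 = P ++ v :: t_stk s0).
Hypothesis hPf : forall y, y \in P -> fresh s0 s2 y /\ y != v.

Lemma mem_stk_popped y : (y \in t_stk s2) = (y \in rcons P v) || (y \in t_stk s0).
Proof. by rewrite hP -cat_rcons mem_cat. Qed.

Lemma take_popped : take (index v (t_stk s2)).+1 (t_stk s2) = rcons P v.
Proof.
have vP : v \notin P by apply/negP => /hPf [_ /eqP].
rewrite hP index_cat (negbTE vP) /= eqxx addn0.
by rewrite -cat_rcons take_size_cat // size_rcons.
Qed.

Lemma drop_popped : drop (index v (t_stk s2)).+1 (t_stk s2) = t_stk s0.
Proof.
have vP : v \notin P by apply/negP => /hPf [_ /eqP].
rewrite hP index_cat (negbTE vP) /= eqxx addn0.
by rewrite -cat_rcons drop_size_cat // size_rcons.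
Qed.

(* No edge leaves the new segment towards the old stack, or low v would have
   dropped below t_cnt s0. *)
Lemma root_reach_fresh_or_done y : connect E v y ->
  fresh s0 s2 y \/ (t_idx s0 y != None /\ y \notin t_stk s0).
Proof.
pose Q y := fresh s0 s2 y \/ (t_idx s0 y != None /\ y \notin t_stk s0).
apply: (@connect_closed _ _ Q); last by left; rewrite /fresh hv (si_v Js).
move=> u w [hu|[hu1 hu2]] euw; last by right; apply: inv_done_closed hu1 hu2 euw.
have [h1 h2] : t_idx s2 w != None /\
    (forall k, t_idx s0 w = Some k -> w \in t_stk s0 -> t_low s2 v <= k).
  case: (u =P v) => [e|/eqP ne]; first by apply: scanned_all; rewrite -e.
  exact: (si_edge Js hu ne euw).
case Ew: (t_idx s0 w) => [k|]; last by left; rewrite /fresh Ew h1.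
right; split; first by rewrite Ew.
apply/negP => ws.
by have := h2 k Ew ws; have := inv_idx_lt Is0 Ew; rewrite root; lia.
Qed.

Lemma root_to_popped y : y \in rcons P v -> connect E v y.
Proof.
rewrite mem_rcons inE => /orP [/eqP ->|/hPf [hy _]]; first exact: connect0.
exact: (si_reach Js hy).
Qed.

Lemma popped_to_root y : y \in rcons P v -> connect E y v.
Proof.
suff: forall m y k, k < m -> t_idx s2 y = Some k -> y \in rcons P v -> connect E y v.
  move=> H yC; have ys : y \in t_stk s2 by rewrite mem_stk_popped yC.
  case Ey: (t_idx s2 y) (inv_stk_visited (si_inv Js) ys) => [k|] // _.
  exact: H k.+1 y k (ltnSn k) Ey yC.
elim=> [|m IHm] {}y k // hk hy yC; move: (yC); rewrite mem_rcons inE => /orP [/eqP ->|yP].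
  exact: connect0.
have [hyf yv] := hPf yP.
have ys : y \in t_stk s2 by rewrite mem_stk_popped yC.
(* [si_rch] gives a stack vertex u of smaller index reachable from y; being
   reachable from v, u cannot predate the call, so it lies in the segment. *)
have [u [k1 [k2 [uS iu iy lt cyu]]]] := si_rch Js hyf yv ys.
apply: (connect_trans cyu); move: uS; rewrite mem_stk_popped => /orP [uC|uS].
  by apply: (IHm u k1) => //; move: iy lt hk; rewrite hy => -[<-]; lia.
have [/andP [/eqP h _]|[_ h]] := root_reach_fresh_or_done (connect_trans (root_to_popped yC) cyu).
  by have := inv_stk_visited Is0 uS; rewrite h.
by rewrite uS in h.
Qed.

Lemma scc_in_popped y : connect E v y -> connect E y v -> y \in rcons P v.
Proof.
move=> cvy cyv; case: (root_reach_fresh_or_done cvy) => [/andP [/eqP h0 h2]|[h1 h2]].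
  case ys: (y \in t_stk s2).
    by move: ys; rewrite mem_stk_popped => /orP [//|/(inv_stk_visited Is0)]; rewrite h0.
  have [] := done_closed_connect (si_inv Js) h2 (negbT ys) cyv.
  by rewrite hP mem_cat inE eqxx orbT.
by have [] := done_closed_connect Is0 h1 h2 cyv; rewrite hv.
Qed.

Lemma popped_sccP y : y \in rcons P v <-> connect E v y /\ connect E y v.
Proof.
split=> [yC|[]]; last exact: scc_in_popped.
by split; [exact: root_to_popped | exact: popped_to_root].
Qed.

Lemma pop_found : has (fun y => y \in A) (rcons P v) ->
  [forall a in A, a \in rcons P v] = true <-> strongly_connected E A.
Proof.
case/hasP=> a0 a0C a0A; rewrite -(subset_scc popped_sccP a0A a0C).
by split=> [/forall_inP|?]; last apply/forall_inP.
Qed.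

Section Continue.
Variable c : nat.
Hypothesis hasNA : ~~ has (fun y => y \in A) (rcons P v).
Local Notation s3 := (TSt (t_idx s2) (t_low s2) (t_stk s0) (t_cnt s2) c).

Lemma tarjan_inv_pop : tarjan_inv s3.
Proof.
have Is2 := si_inv Js; split => /=.
- exact: inv_idx_lt Is2.
- by move=> y /(inv_stk_visited Is0); case Ey: (t_idx s0 y) => [k|] // _; rewrite (si_idx Js Ey).
- move=> y z hy hny eyz; case yC: (y \in rcons P v).
    case: (root_reach_fresh_or_done (connect_trans (root_to_popped yC) (connect1 eyz))).
      by case/andP=> /eqP h0 h2; split => //; apply/negP => /(inv_stk_visited Is0); rewrite h0.
    case=> h1 h2; split => //.
    by case Ez: (t_idx s0 z) h1 => [k|] // _; rewrite (si_idx Js Ez).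
  have hny2 : y \notin t_stk s2 by rewrite mem_stk_popped yC.
  have [h1 h2] := inv_done_closed Is2 hy hny2 eyz.
  by split => //; apply/negP => zs; move: h2; rewrite mem_stk_popped zs orbT.
- move=> y yA hy; have := inv_A_stk Is2 yA hy; rewrite mem_stk_popped => /orP [yC|//].
  by move/hasPn: hasNA => /(_ y yC); rewrite yA.
Qed.

Lemma visit_post_pop : visit_post v s0 s3.
Proof.
case: (Js) => _ Jidx Jv Jnew Jcnt _ _ _ _ Jreach _ Jlow_old _; constructor => //=.
- exact: tarjan_inv_pop.
- by exists [::].
- by left.
- by move=> y /andP [/eqP h0 _] /(inv_stk_visited Is0); rewrite h0.
- move=> y z hy eyz.
  case: (root_reach_fresh_or_done (connect_trans (Jreach _ hy) (connect1 eyz))).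
    by case/andP=> /eqP h0 h2; split => // k; rewrite h0.
  case=> h1 h2; split=> [|k _ hs]; last by rewrite hs in h2.
  by case Ez: (t_idx s0 z) h1 => [k|] // _; rewrite (Jidx _ _ Ez).
Qed.

End Continue.
End PopComponent.

Lemma visit_post_no_pop f v s0 s2 : tarjan_inv s0 -> t_idx s0 v = None ->
  scan_inv v s0 s2 f -> (forall w, scanned v s0 s2 w) -> t_low s2 v != t_cnt s0 ->
  visit_post v s0 s2.
Proof.
move=> Is0 hv Js sc noroot; have [P [HP HPf]] := si_stk Js.
have [u [k [uS iu lk cvu]]] : exists u k,
    [/\ u \in t_stk s0, t_idx s0 u = Some k, t_low s2 v = k & connect E v u].
  by case: (si_low Js) => // e; rewrite e eqxx in noroot.
case: (Js) => Ji Jidx Jv Jnew Jcnt _ _ _ Jrch Jreach Jedge Jlow_old _; constructor => //.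
- exists (rcons P v); split; first by rewrite HP cat_rcons.
  move=> y; rewrite mem_rcons inE => /orP [/eqP ->|/HPf []//].
  by rewrite /fresh hv Jv.
- by right; exists u, k.
- move=> y hy ys; case: (y =P v) => [->|/eqP yv]; last exact: Jrch.
  exists u, k, (t_cnt s0); split => //; first by rewrite HP mem_cat inE uS !orbT.
  + exact: Jidx.
  + exact: (inv_idx_lt Is0 iu).
- move=> y z hy eyz; case: (y =P v) => [e|/eqP yv]; last exact: Jedge _ _ hy yv eyz.
  by apply: sc; rewrite -e.
Qed.

Lemma scan_edges_ok f v s0 : tarjan_inv s0 -> t_idx s0 v = None ->
  (forall w s, tarjan_inv s -> unvisited s <= f -> t_idx s w = None ->
     visit_spec w s (tvisit f w s)) ->
  forall ws t, {subset ws <= R v} -> scan_inv v s0 t f ->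
  (forall w, w \notin ws -> scanned v s0 t w) -> scan_spec f v s0 (scan_edges f v ws t).
Proof.
move=> Is0 hv visit_ok; elim=> [|w ws IHws] t sub Jt sc; first by split => // w; apply: sc.
have Rvw : R v w := sub w (mem_head _ _).
have {}sub : {subset ws <= R v} by move=> u hu; apply: sub; rewrite inE hu orbT.
have step t' : scan_inv v s0 t' f -> idx_extends t t' -> t_low t' v <= t_low t v ->
    scanned v s0 t' w -> scan_spec f v s0 (scan_edges f v ws t').
  move=> Jt' ext hl scw; apply: IHws => // u hu; case: (u =P w) => [->|/eqP uw] //.
  by apply: scanned_mono ext hl; apply: sc; rewrite inE negb_or uw hu.
rewrite scan_edges_cons; case: ifP => [wnB|/negbFE wB].
  apply: step (scan_inv_tick Jt) _ (leqnn _) _ => // /andP [_ wB].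
  by rewrite wB in wnB.
have evw : E v w by rewrite /edge_in /= Rvw wB.
case Ew: (t_idx t w) => [iw|].
  case: ifP => wS.
    have [Jt' scw] := scan_back_edge Is0 hv Jt evw Ew wS.
    by apply: step Jt' _ _ scw => //=; rewrite /upd eqxx geq_minl.
  apply: step (scan_inv_tick Jt) _ (leqnn _) _ => // _; split=> [|k _ hs]; first by rewrite Ew.
  by have [P [HP _]] := si_stk Jt; rewrite HP mem_cat inE hs !orbT in wS.
have := visit_ok w (tick t) (tarjan_inv_TSt _ _ (si_inv Jt)) (si_fuel Jt) Ew.
case: (tvisit f w (tick t)) => [b c|s'] //= Pv.
have [Jt' scw] := scan_tree_edge Is0 hv Jt evw Ew Pv.
by apply: step Jt' (vp_idx Pv) _ scw; rewrite (tree_edge_low_v Jt Pv) geq_minl.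
Qed.

Lemma tvisit_ok f v s : tarjan_inv s -> unvisited s <= f -> t_idx s v = None ->
  visit_spec v s (tvisit f v s).
Proof.
elim: f v s => [|f IHf] v s Is hf hv.
  have : 0 < unvisited s by apply/card_gt0P; exists v; rewrite inE hv.
  by rewrite ltnNge hf.
rewrite tvisit_unfold.
have sub : {subset adj R v <= R v} by move=> w; rewrite mem_adj.
have sc0 w : w \notin adj R v -> scanned v s (push_vertex v s) w.
  by rewrite mem_adj /scanned /edge_in /= => /negbTE -> //.
have := scan_edges_ok Is hv IHf sub (scan_inv_push Is hv hf) sc0.
case: (scan_edges f v (adj R v) (push_vertex v s)) => [b c|s2] //= [Js sc].
case: eqP => [root|/eqP noroot]; last exact: (visit_post_no_pop Is hv Js sc noroot).
have [P [HP HPf]] := si_stk Js.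
rewrite (take_popped HP HPf) (drop_popped HP HPf).
case: ifP => hasA; first exact: (pop_found Is hv Js sc root HP HPf hasA).
exact: (visit_post_pop Is hv Js sc root HP HPf _ (negbT hasA)).
Qed.

Lemma tarjan_from_correct x : x \in A ->
  (tarjan_from R B A x).1 = true <-> strongly_connected E A.
Proof.
move=> xA; have Is0 : tarjan_inv (tinit X) by split.
have := tvisit_ok Is0 (leq_trans (max_card _) (leqnSn _)) (erefl : t_idx (tinit X) x = None).
rewrite /tarjan_from; case: (tvisit _ _ _) => [b c|s] //= Pv.
have xS : x \in t_stk s by apply: (inv_A_stk (vp_inv Pv) xA); rewrite (vp_v Pv).
by case: (vp_low Pv) => [[_ hs]|[u [k []]]]; first rewrite hs in xS.
Qed.
End Tarjan.

(** * The procedure Sat_C *)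

Lemma sum_size_adj (X : finType) (R : rel X) : \sum_(y : X) size (adj R y) = nedges R.
Proof.
rewrite /nedges -sum1dep_card.
under eq_bigr => y _ do rewrite /adj -sum1_size big_filter enumT.
by rewrite pair_big_dep; apply: eq_bigl => -[a b].
Qed.

Lemma strongly_connected_path_connected (X : finType) (R : rel X) (Bs A : {set X}) x :
  x \in A -> A \subset Bs ->
  strongly_connected (edge_in R Bs) A <->
  exists P : X -> Prop, (forall y, y \in A -> P y) /\ path_connected R P /\
    forall z, P z -> z \in Bs.
Proof.
move=> xA /subsetP ABs; split=> [Ascc|[P [PA [Ppc PBs]]] a a' aA a'A].
- exists (fun y => connect (edge_in R Bs) x y /\ connect (edge_in R Bs) y x).
  split; first by move=> y yA; split; apply: Ascc.
  split; first by apply: path_connected_scc => u w /andP [].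
  move=> z [cxz _]; apply: (@connect_closed _ _ (fun y => y \in Bs)) cxz; last exact: ABs.
  by move=> u w _ /andP [].
- exact: path_connected_connect Ppc PBs (PA a aA) (PA a' a'A).
Qed.

Section Collective.
Variables (AP : Type) (X : finType) (R : rel X) (V : AP -> {set X}).
Variables (sat : slcs AP -> {set X}) (satc : slcs AP -> nat).

Lemma csem_ext psi (P Q : X -> Prop) :
  (forall x, P x <-> Q x) -> csem R V psi P <-> csem R V psi Q.
Proof.
elim: psi P Q => [|g IHg|g IHg h IHh|phi g IHg|phi] P Q PQ //=.
- by rewrite (IHg P Q PQ).
- by rewrite (IHg P Q PQ) (IHh P Q PQ).
- by apply: IHg => x; rewrite PQ.
- by split=> -[B' [PB' rest]]; exists B'; split => // x /PQ /PB'.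
Qed.

Section Cost.
Variable c0 : nat.
Hypothesis satc_bound : forall phi, satc phi <= c0 * ssize phi * (#|X| + nedges R).

Lemma SatC_cost psi A :
  (SatC R sat satc A psi).2 <= (c0 + 7) * csize psi * (#|X| + nedges R + 1).
Proof.
have hX := leq_addr (nedges R) #|X|.
(* [#|X|] is generalized before each call to [nia], which fails on it otherwise. *)
elim: psi A => [|g IHg|g IHg h IHh|phi g IHg|phi] A /=.
- by move: hX; move: #|X| => x; nia.
- by move: (IHg A) hX; move: #|X| => x; nia.
- by move: (IHg A) (IHh A) hX; move: #|X| => x; nia.
- by move: (IHg (sat phi :&: A)) (satc_bound phi) hX; move: #|X| => x; nia.
have hb := satc_bound phi; case: ifP => _ /=; first by move: hX; move: #|X| => x; nia.
case: ifP => _ /=; first by move: hb hX; move: #|X| => x; nia.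
case: pickP => [x _|_] /=; last by move: hb hX; move: #|X| => x; nia.
move: (tarjan_from_cost R (sat phi) A x) hb hX; rewrite sum_size_adj.
by move: #|X| => n; nia.
Qed.

End Cost.

Hypothesis satP : forall phi x, x \in sat phi <-> sem R V phi x.

Lemma SatC_group_correct phi A :
  (SatC R sat satc A (CGroup phi)).1 = true <-> csem R V (CGroup phi) (fun x => x \in A).
Proof.
rewrite /=; case: (A =P set0) => [->|/eqP /set0Pn [x xA]] /=.
  split=> // _; exists (fun _ => False); split; first by move=> y; rewrite inE.
  by split=> // y z [].
case: ifP => [nsub|/negbFE sub].
  split=> // -[P [PA [_ Pphi]]]; suff: A \subset sat phi by rewrite (negbTE nsub).
  by apply/subsetP => a /PA /Pphi /satP.
case: pickP => [y yA|/(_ x)]; last by rewrite xA.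
rewrite tarjan_from_correct // (strongly_connected_path_connected _ yA sub).
by split=> -[P [PA [Ppc Pphi]]]; exists P; do 2!split => //; move=> z /Pphi /satP.
Qed.

Lemma SatC_correct psi A :
  (SatC R sat satc A psi).1 = true <-> csem R V psi (fun x => x \in A).
Proof.
elim: psi A => [|g IHg|g IHg h IHh|phi g IHg|phi] A /=.
- by [].
- by rewrite -IHg; case: (SatC _ _ _ _ _).1.
- by rewrite -IHg -IHh; case: (SatC _ _ _ _ g).1; case: (SatC _ _ _ _ h).1; split=> // -[].
- rewrite IHg; apply: csem_ext => x; rewrite inE.
  by split=> [/andP [/satP ? ?]|[? /satP ?]]; [|apply/andP].
- exact: SatC_group_correct.
Qed.

End Collective.

Theorem theorem6p4 :
  forall c0 : nat, exists c : nat,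
  forall (AP : Type) (X : finType) (R : rel X) (V : AP -> {set X})
         (sat : slcs AP -> {set X}) (satc : slcs AP -> nat),
    (forall (phi : slcs AP) (x : X), x \in sat phi <-> sem R V phi x) ->
    (forall phi : slcs AP, satc phi <= c0 * ssize phi * (#|X| + nedges R)) ->
    forall (psi : cform AP) (A : {set X}),
      ((SatC R sat satc A psi).1 = true <-> csem R V psi (fun x => x \in A)) /\
      (SatC R sat satc A psi).2 <= c * csize psi * (#|X| + nedges R + 1).
Proof.
move=> c0; exists (c0 + 7) => AP X R V sat satc satP satc_bound psi A.
by split; [exact: SatC_correct | exact: SatC_cost].
Qed.
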